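(* Let $\phi:\mathbb{R}^n\to[-\infty,\infty]$ be a proper nearly convex function, $\Theta\subset\mathbb{R}^n$ a nearly convex set, and $G:\mathbb{R}^n\rightrightarrows\mathbb{R}^q$ a nearly convex set-valued mapping. Suppose $$\operatorname{ri}(\operatorname{dom}\phi)\cap\operatorname{ri}(\operatorname{dom} G)\cap\operatorname{ri}\Theta\neq\emptyset\quad\text{and}\quad 0\in\operatorname{ri}\big(G(\Theta\cap\operatorname{dom}\phi)\big).$$ For $u^*\in\mathbb{R}^n$, $y^*\in\mathbb{R}^q$ let $v_G(x,y^* )=\inf\{\langle -y^*,y\rangle:y\in G(x)\}$ and $h_1(u^*,y^* )=-\phi^*(u^* )+\inf\{\langle u^*,x\rangle+v_G(x,y^* ):x\in\Theta\}$, the infimum understood as $\inf\{\langle u^*,x\rangle-\langle y^*,y\rangle:x\in\Theta,\ y\in G(x)\}$. Then $\mathcal{V}=\mathcal{V}_d$, where $\mathcal{V}=\inf\{\phi(x):x\in\Theta,\ 0\in G(x)\}$ and $\mathcal{V}_d=\sup\{h_1(u^*,y^* ):u^*\in\mathbb{R}^n,\ y^*\in\mathbb{R}^q\}$.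
   Context: A set $\Omega$ is nearly convex if there is a convex set $C$ with $C\subset\Omega\subset\overline{C}$; $\operatorname{ri}\Omega=\{a\in\Omega:\exists\delta>0,\ B(a;\delta)\cap\operatorname{aff}\Omega\subset\Omega\}$. A function is nearly convex if its epigraph is nearly convex, proper if its domain $\{\phi<\infty\}$ is nonempty and $\phi>-\infty$. Fenchel conjugate $\phi^*(u^* )=\sup_z\{\langle u^*,z\rangle-\phi(z)\}$. For $G:\mathbb{R}^n\rightrightarrows\mathbb{R}^q$: $\operatorname{dom}G=\{x:G(x)\neq\emptyset\}$, $G$ nearly convex if $\operatorname{gph}G=\{(x,y):y\in G(x)\}$ is; $G(S)=\bigcup_{x\in S}G(x)$. Convention $\inf\emptyset=\infty$. *)

From HB Require Import structures.
From mathcomp Require Import all_boot all_order all_algebra.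
From mathcomp Require Import all_classical all_reals all_analysis.
Set Implicit Arguments. Unset Strict Implicit. Unset Printing Implicit Defensive.
Import Order.TTheory GRing.Theory Num.Theory.
Import numFieldNormedType.Exports.
Local Open Scope classical_set_scope.
Local Open Scope ring_scope.

Section Defs.
Variable R : realType.

Definition dotp (m : nat) (u x : 'rV[R]_m) : R := \sum_(i < m) u 0 i * x 0 i.

Definition eball (m : nat) (a : 'rV[R]_m) (d : R) : set 'rV[R]_m :=
  [set x | \sum_(i < m) (x 0 i - a 0 i) ^+ 2 < d ^+ 2].

Definition aff (m : nat) (S : set 'rV[R]_m) : set 'rV[R]_m :=
  [set x | exists (k : nat) (w : 'I_k -> R) (p : 'I_k -> 'rV[R]_m),
     (forall i, S (p i)) /\ \sum_(i < k) w i = 1 /\ x = \sum_(i < k) w i *: p i].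

Definition ri (m : nat) (S : set 'rV[R]_m) : set 'rV[R]_m :=
  [set a | S a /\ exists d : R, 0 < d /\ eball a d `&` aff S `<=` S].

Definition convex1 {V : normedModType R} (C : set V) :=
  forall x y (t : R), C x -> C y -> 0 <= t <= 1 -> C (t *: x + (1 - t) *: y).

Definition nearly_convex1 {V : normedModType R} (S : set V) :=
  exists C : set V, convex1 C /\ C `<=` S /\ S `<=` closure C.

Definition convex2 {V W : normedModType R} (C : set (V * W)) :=
  forall x y (t : R), C x -> C y -> 0 <= t <= 1 ->
    C (t *: x.1 + (1 - t) *: y.1, t *: x.2 + (1 - t) *: y.2).

Definition nearly_convex2 {V W : normedModType R} (S : set (V * W)) :=
  exists C : set (V * W), convex2 C /\ C `<=` S /\ S `<=` closure C.

Definition edom (n : nat) (phi : 'rV[R]_n -> \bar R) : set 'rV[R]_n :=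
  [set x | (phi x < +oo)%E].

Definition proper_fun (n : nat) (phi : 'rV[R]_n -> \bar R) :=
  (exists x, (phi x < +oo)%E) /\ (forall x, (-oo < phi x)%E).

Definition epigraph (n : nat) (phi : 'rV[R]_n -> \bar R) : set ('rV[R]_n * R^o) :=
  [set p | (phi p.1 <= (p.2 : R)%:E)%E].

Definition nearly_convex_fun (n : nat) (phi : 'rV[R]_n -> \bar R) :=
  nearly_convex2 (epigraph phi).

Definition fconj (n : nat) (phi : 'rV[R]_n -> \bar R) (u : 'rV[R]_n) : \bar R :=
  ereal_sup [set ((dotp u z)%:E - phi z)%E | z in [set: 'rV[R]_n]].

Definition mdom (n q : nat) (G : 'rV[R]_n -> set 'rV[R]_q) : set 'rV[R]_n :=
  [set x | G x !=set0].

Definition gph (n q : nat) (G : 'rV[R]_n -> set 'rV[R]_q) : set ('rV[R]_n * 'rV[R]_q) :=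
  [set p | G p.1 p.2].

Definition nearly_convex_map (n q : nat) (G : 'rV[R]_n -> set 'rV[R]_q) :=
  nearly_convex2 (gph G).

Definition mimage (n q : nat) (G : 'rV[R]_n -> set 'rV[R]_q) (S : set 'rV[R]_n) :
  set 'rV[R]_q := \bigcup_(x in S) G x.

Definition h1 (n q : nat) (phi : 'rV[R]_n -> \bar R) (Theta : set 'rV[R]_n)
  (G : 'rV[R]_n -> set 'rV[R]_q) (u : 'rV[R]_n) (ys : 'rV[R]_q) : \bar R :=
  (- fconj phi u +
   ereal_inf [set (dotp u x.1 - dotp ys x.2)%:E |
                x in [set p : 'rV[R]_n * 'rV[R]_q | Theta p.1 /\ G p.1 p.2]])%E.

Definition primal_value (n q : nat) (phi : 'rV[R]_n -> \bar R) (Theta : set 'rV[R]_n)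
  (G : 'rV[R]_n -> set 'rV[R]_q) : \bar R :=
  ereal_inf [set phi x | x in [set x | Theta x /\ G x 0]].

Definition dual_value (n q : nat) (phi : 'rV[R]_n -> \bar R) (Theta : set 'rV[R]_n)
  (G : 'rV[R]_n -> set 'rV[R]_q) : \bar R :=
  ereal_sup [set h1 phi Theta G p.1 p.2 | p in [set: 'rV[R]_n * 'rV[R]_q]].

End Defs.

From HB Require Import structures.
From mathcomp Require Import all_boot all_order all_algebra.
From mathcomp Require Import all_classical all_reals all_analysis.
From mathcomp Require Import ring lra.
Import Order.TTheory GRing.Theory Num.Theory.
Import numFieldNormedType.Exports.
Set Implicit Arguments. Unset Strict Implicit. Unset Printing Implicit Defensive.
Local Open Scope classical_set_scope.
Local Open Scope ring_scope.

(* Near convexity provides convex cores  C1 ⊆ epi phi ⊆ cl C1,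
   C2 ⊆ Theta ⊆ cl C2  and  C3 ⊆ gph G ⊆ cl C3; the argument runs on them.
   1. Finite-dimensional convex geometry, with sup-norm boxes in place of
      Euclidean balls: affine hulls are translates of row spaces of matrices
      (hence closed), nonempty convex sets have relative interior points, the
      line segment principle holds, and the relative interior points of a
      nearly convex set are relative interior points of its convex core.
   2. A separation theorem in R^N x R, proved one coordinate at a time.
   3. The qualification conditions give a point x0 relatively interior to the
      domains of C1 and C2, with (x0, 0) relatively interior to C3.  Separating
      the values ((z - x, w), r), (x, r) ∈ C1, z ∈ C2, (z, w) ∈ C3, from the
      primal value v gives Lagrange multipliers (u, ys); by closure arguments
      they also work on epi phi, Theta and gph G, whence v <= h1 u ys.
   Together with weak duality this gives V = V_d. *)

Section Boxes.
Variables (R : realType) (m : nat).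
Implicit Types (S : set 'rV[R]_m) (a c x : 'rV[R]_m).

(* The open box of half-width [d] around [a] (sup-norm ball); it is more
   convenient than the Euclidean ball of [ri] for coordinatewise estimates. *)
Definition box a (d : R) : set 'rV[R]_m := [set x | forall i, `|x 0 i - a 0 i| < d].

Lemma box_center a (d : R) : 0 < d -> box a d a.
Proof. by move=> d0 i; rewrite subrr normr0. Qed.

Definition rint S a := S a /\ exists d, 0 < d /\ forall x, box a d x -> aff S x -> S x.

Definition adherent S b := forall e, 0 < e -> exists y, S y /\ box b e y.

Lemma adherent_self S x : S x -> adherent S x.
Proof. by move=> Sx e e0; exists x; split => //; apply: box_center. Qed.

(* A box of half-width [d / (m + 1)] lies in the Euclidean ball of radius [d],
   so points of [ri S] are also box-relative-interior points. *)
Lemma ri_rint S a : ri S a -> rint S a.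
Proof.
move=> [Sa [d [d0 H]]]; split => //.
have k0 : 0 < m%:R + 1 :> R by rewrite ltr_wpDl.
exists (d / (m%:R + 1)); split; first by rewrite divr_gt0.
move=> x xb xa; apply: H; split => //; rewrite /eball /=.
apply: (@le_lt_trans _ _ (\sum_(i < m) (d / (m%:R + 1)) ^+ 2)).
  apply: ler_sum => i _; rewrite -real_normK ?num_real //.
  by rewrite lerXn2r ?nnegrE ?normr_ge0 ?divr_ge0 ?ltW // ltW.
rewrite sumr_const card_ord expr_div_n -[_ *+ m]mulr_natr mulrAC -mulrA.
rewrite gtr_pMr ?exprn_gt0 // ltr_pdivrMr ?exprn_gt0 // mul1r.
have m0 : 0 <= m%:R :> R by [].
rewrite expr2; nra.
Qed.

Lemma box_prolong a c (d : R) : 0 < d ->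
  exists2 e, 0 < e & forall s, 0 <= s <= e -> box a d (a + s *: (a - c)).
Proof.
move=> d0; set M := \sum_i `|a 0 i - c 0 i|.
have M0 : 0 <= M by apply: sumr_ge0.
exists (d / (M + 1)); first by rewrite divr_gt0 // ltr_wpDl.
move=> s /andP [s0 se] i.
have -> : (a + s *: (a - c)) 0 i - a 0 i = s * (a 0 i - c 0 i) by rewrite !mxE; ring.
rewrite normrM ger0_norm //.
have hi : `|a 0 i - c 0 i| <= M by rewrite /M (bigD1 i) //= lerDl sumr_ge0.
apply: (le_lt_trans (ler_wpM2l s0 hi)); apply: (le_lt_trans (ler_wpM2r M0 se)).
rewrite mulrAC ltr_pdivrMr ?ltr_wpDl //; nra.
Qed.

End Boxes.

Section MatrixNorm.
Variable R : realType.

Definition l1norm m k (M : 'M[R]_(m, k)) : R := \sum_i \sum_j `|M i j|.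

Lemma l1norm_ge0 m k (M : 'M[R]_(m, k)) : 0 <= l1norm M.
Proof. by apply: sumr_ge0 => i _; apply: sumr_ge0. Qed.

Lemma mulmx_bound m k (v : 'rV[R]_m) (M : 'M[R]_(m, k)) e j :
  (forall i, `|v 0 i| <= e) -> `|(v *m M) 0 j| <= e * l1norm M.
Proof.
move=> hv; rewrite mxE /l1norm mulr_sumr.
apply: (le_trans (ler_norm_sum _ _ _)); apply: ler_sum => i _.
rewrite normrM; apply: (@le_trans _ _ (e * `|M i j|)); first by rewrite ler_wpM2r.
apply: ler_wpM2l; first by apply: le_trans (hv i).
by rewrite (bigD1 j) //= lerDl sumr_ge0.
Qed.

End MatrixNorm.

Section AffineSpans.
Variables (R : realType) (m : nat).
Implicit Types (S C : set 'rV[R]_m) (x : 'rV[R]_m).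

Lemma convex_comb_mem C p0 k (q : 'I_k -> 'rV[R]_m) (l : 'I_k -> R) :
  convex1 C -> C p0 -> (forall j, C (q j)) -> (forall j, 0 <= l j) ->
  \sum_j l j <= 1 -> C (p0 + \sum_j l j *: (q j - p0)).
Proof.
move=> cC Cp0; elim: k q l => [|k IH] q l Cq l0 ls; first by rewrite big_ord0 addr0.
rewrite big_ord_recr /=; rewrite big_ord_recr /= in ls.
set L := l ord_max in ls *; set s := \sum_(i < k) l (widen_ord (leqnSn k) i) in ls *.
have L0 : 0 <= L by apply: l0.
have s0 : 0 <= s by apply: sumr_ge0 => i _; apply: l0.
have [L1|L1] := eqVneq L 1.
  have s00 : s = 0 by lra.
  have z i : l (widen_ord (leqnSn k) i) = 0.
    by apply: (psumr_eq0P (fun i _ => l0 (widen_ord (leqnSn k) i)) s00).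
  rewrite (eq_bigr (fun=> 0)); last by move=> i _; rewrite z scale0r.
  by rewrite big1_eq L1 scale1r add0r addrC subrK.
have L1' : L < 1 by rewrite lt_neqAle L1 /=; lra.
(* rescale the first [k] weights to total mass at most one *)
set y := p0 + \sum_(i < k) (l (widen_ord (leqnSn k) i) / (1 - L)) *:
                   (q (widen_ord (leqnSn k) i) - p0).
have Cy : C y.
  apply: IH => // [j|]; first by rewrite divr_ge0 // subr_ge0 ltW.
  by rewrite -mulr_suml ler_pdivrMr ?subr_gt0 // mul1r -/s; lra.
have tt : 0 <= 1 - L <= 1 by apply/andP; split; lra.
have := cC y (q ord_max) (1 - L) Cy (Cq ord_max) tt.
rewrite (_ : 1 - (1 - L) = L); last by ring.
congr C; rewrite /y scalerDr scaler_sumr.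
rewrite (eq_bigr (fun i => l (widen_ord (leqnSn k) i) *:
                           (q (widen_ord (leqnSn k) i) - p0))); last first.
  by move=> i _; rewrite scalerA mulrC divfK // subr_eq0 eq_sym.
rewrite scalerBl scale1r scalerBr.
set T := \sum_(i < k) _; set P := L *: p0; set Q := L *: q ord_max.
by rewrite !addrA (addrAC p0 (- P) T) (addrAC (p0 + T) (- P) Q).
Qed.

Definition affine_span p0 k (A : 'M[R]_(k, m)) : set 'rV[R]_m :=
  [set x | (x - p0 <= A)%MS].

Lemma aff_line S a c e : S a -> S c -> aff S (a + e *: (a - c)).
Proof.
move=> Sa Sc.
exists 2%N, (fun i : 'I_2 => if i == ord0 then 1 + e else - e),
   (fun i : 'I_2 => if i == ord0 then a else c); split; first by move=> i; case: ifP.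
rewrite !big_ord_recr !big_ord0 /= !add0r; split; first by ring.
by rewrite scalerBr scalerDl scale1r scaleNr addrA.
Qed.

Lemma aff_sub_span S p0 k (A : 'M[R]_(k, m)) :
  S `<=` affine_span p0 A -> aff S `<=` affine_span p0 A.
Proof.
move=> SA x [l [w [p [Sp [w1 ->]]]]]; rewrite /affine_span /=.
have -> : \sum_(i < l) w i *: p i - p0 = \sum_(i < l) w i *: (p i - p0).
  rewrite -{1}[p0]scale1r -w1 scaler_suml -sumrB.
  by apply: eq_bigr => i _; rewrite scalerBr.
by apply: summx_sub => i _; apply: scalemx_sub; apply: SA.
Qed.

Lemma span_sub_aff C p0 k (A : 'M[R]_(k, m)) :
  C p0 -> (forall j, C (p0 + row j A)) -> affine_span p0 A `<=` aff C.
Proof.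
move=> Cp0 CA x Ax.
set al := (x - p0) *m pinvmx A.
have ex : x - p0 = \sum_j al 0 j *: row j A by rewrite -mulmx_sum_row mulmxKpV.
pose w (i : 'I_k.+1) := if unlift ord0 i is Some j then al 0 j else 1 - \sum_j al 0 j.
pose p (i : 'I_k.+1) := if unlift ord0 i is Some j then p0 + row j A else p0.
exists k.+1, w, p; split; first by move=> i; rewrite /p; case: (unlift ord0 i).
have wS j : w (lift ord0 j) = al 0 j by rewrite /w liftK.
have pS j : p (lift ord0 j) = p0 + row j A by rewrite /p liftK.
rewrite !big_ord_recl (eq_bigr _ (fun j _ => wS j)).
under [X in _ = _ + X]eq_bigr => j _ do rewrite wS pS.
rewrite /w /p !unlift_none; split; first by ring.
have -> : \sum_(i < k) al 0 i *: (p0 + row i A) = (\sum_j al 0 j) *: p0 + (x - p0).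
  by rewrite ex scaler_suml -big_split /=; apply: eq_bigr => j _; rewrite scalerDr.
by rewrite scalerBl scale1r addrA subrK addrC subrK.
Qed.

Lemma affine_span_closed p0 k (A : 'M[R]_(k, m)) b :
  adherent (affine_span p0 A) b -> affine_span p0 A b.
Proof.
move=> H; rewrite /affine_span /= submxE; apply/eqP/rowP => j; rewrite [RHS]mxE.
set u := ((b - p0) *m cokermx A) 0 j; set B := l1norm (cokermx A).
have B0 : 0 <= B := l1norm_ge0 (cokermx A).
apply/eqP; rewrite -normr_le0 leNgt; apply/negP => u0.
have [y [Ay yb]] := H (`|u| / (B + 1)) (divr_gt0 u0 (ltr_wpDl B0 ltr01)).
have y0 : (y - p0) *m cokermx A = 0 by apply/eqP; rewrite -submxE.
have ueq : u = ((b - y) *m cokermx A) 0 j.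
  rewrite /u -[b - p0](subrK (y - p0)) mulmxDl y0 addr0.
  by congr ((_ *m _) _ _); rewrite opprB addrA subrK.
have : `|u| <= `|u| / (B + 1) * B.
  by rewrite {1}ueq; apply: mulmx_bound => i; rewrite !mxE distrC ltW.
rewrite mulrAC ler_pdivlMr ?ltr_wpDl //; nra.
Qed.

(* Every set through [p0] has an affine span through [p0] generated by rows
   [A] with [p0 + row j A] in the set: take such an [A] of maximal rank. *)
Lemma affine_span_basis C p0 : C p0 ->
  exists k (A : 'M[R]_(k, m)), (forall j, C (p0 + row j A)) /\ C `<=` affine_span p0 A.
Proof.
move=> Cp0.
pose P r := `[< exists k (A : 'M[R]_(k, m)), (forall j, C (p0 + row j A)) /\ \rank A = r >].
have exP : exists r, P r.
  by exists 0%N; apply/asboolP; exists 0%N, 0; split; [case | rewrite mxrank0].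
have ubP r : P r -> (r <= m)%N by move=> /asboolP [k [A [_ <-]]]; apply: rank_leq_col.
case: (ex_maxnP exP ubP) => r /asboolP [k [A [CA rA]]] rmax.
exists k, A; split => // x Cx; rewrite /affine_span /=.
apply/negPn/negP => nx; set A' := col_mx A (x - p0).
have : P (\rank A').
  apply/asboolP; exists (k + 1)%N, A'; split => // j.
  case: (splitP j) => j' ej.
    by rewrite (_ : j = lshift 1 j') ?rowKu //; apply: val_inj.
  rewrite (_ : j = rshift k j'); last by apply: val_inj.
  by rewrite rowKd row_id addrC subrK.
move/rmax; rewrite -rA; apply/negP; rewrite -ltnNge.
have : (A < A')%MS by rewrite ltmxE col_mx_sub submx_refl -addsmxE addsmxSl.
by rewrite ltmxErank => /andP [].
Qed.

Lemma aff_eq_span C p0 k (A : 'M[R]_(k, m)) :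
  C p0 -> (forall j, C (p0 + row j A)) -> C `<=` affine_span p0 A ->
  aff C = affine_span p0 A.
Proof.
move=> Cp0 CA CAf; apply/seteqP; split; first exact: aff_sub_span.
exact: span_sub_aff.
Qed.

End AffineSpans.

Section RelativeInterior.
Variables (R : realType) (m : nat).
Implicit Types (C Om : set 'rV[R]_m) (a b c x y : 'rV[R]_m).

Lemma small_coords k (A : 'M[R]_(k, m)) c x (d : R) :
  box c d x -> (x - c <= A)%MS ->
  exists al : 'rV[R]_k, x - c = \sum_j al 0 j *: row j A /\
                        forall j, `|al 0 j| <= d * l1norm (pinvmx A).
Proof.
move=> xb xcA; exists ((x - c) *m pinvmx A); split.
  by rewrite -mulmx_sum_row mulmxKpV.
by move=> j; apply: mulmx_bound => i; rewrite !mxE ltW.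
Qed.

(* Points [p0 + sum_j (1/K + al_j) row_j A], with [K = k + 1] and
   [|al_j| <= 1/K^2], are convex combinations of [p0] and the [p0 + row j A]:
   the weights are nonnegative with sum at most one. *)
Lemma convex_near_barycenter C p0 k (A : 'M[R]_(k, m)) (al : 'rV[R]_k) :
  convex1 C -> C p0 -> (forall j, C (p0 + row j A)) ->
  (forall j, `|al 0 j| <= (k%:R + 1)^-1 ^+ 2) ->
  C (p0 + \sum_j ((k%:R + 1)^-1 + al 0 j) *: row j A).
Proof.
move=> cC Cp0 CA; set K : R := k%:R + 1; set iK := K^-1; move=> al_le.
have K0 : 0 < K by rewrite ltr_wpDl.
have iK0 : 0 <= iK by rewrite invr_ge0 ltW.
have iKK : iK * K = 1 by rewrite mulVf // gt_eqF.
have iK2 : iK ^+ 2 <= iK by rewrite expr2 ler_piMl // invf_le1 // lerDr.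
rewrite (eq_bigr (fun j => (iK + al 0 j) *: (p0 + row j A - p0))); last first.
  by move=> j _; rewrite addrAC subrr add0r.
apply: convex_comb_mem => // [j|].
  by have := al_le j; rewrite ler_norml => /andP [h1 h2]; lra.
rewrite big_split /= sumr_const card_ord.
have : \sum_(j < k) al 0 j <= k%:R * iK ^+ 2.
  have h j : true -> al 0 j <= iK ^+ 2 by move=> _; apply: le_trans (ler_norm _) (al_le j).
  by apply: le_trans (ler_sum _ h) _; rewrite sumr_const card_ord mulr_natl.
rewrite -[iK *+ k]mulr_natr (_ : k%:R = K - 1); last by rewrite /K addrK.
rewrite expr2 in iK2 * => h; nra.
Qed.

(* A nonempty convex set has a relative interior point: with a basis [A] of
   its affine span through [p0], the barycenter of [p0] and the [p0 + row j A]
   works, since the points of the span near it are as in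
   [convex_near_barycenter]. *)
Lemma convex_rint_exists C p0 : convex1 C -> C p0 -> exists c, rint C c.
Proof.
move=> cC Cp0; have [k [A [CA CAf]]] := affine_span_basis Cp0.
have affE := aff_eq_span Cp0 CA CAf.
set iK : R := (k%:R + 1)^-1.
have iK0 : 0 < iK by rewrite invr_gt0 ltr_wpDl.
set c := p0 + \sum_(j < k) iK *: row j A.
set B := l1norm (pinvmx A).
have B0 : 0 <= B := l1norm_ge0 _.
set d := iK ^+ 2 / (B + 1).
have d0 : 0 < d by rewrite divr_gt0 ?exprn_gt0 ?ltr_wpDl.
have dB : d * B <= iK ^+ 2.
  have BB : B / (B + 1) <= 1 by rewrite ler_pdivrMr ?ltr_wpDl // mul1r lerDl.
  by rewrite /d mulrAC -mulrA; apply: ler_piMr => //; apply/exprn_ge0/ltW.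
exists c; split.
  have := @convex_near_barycenter C p0 k A 0 cC Cp0 CA.
  under eq_bigr => j _ do rewrite mxE addr0.
  by apply => j; rewrite mxE normr0 exprn_ge0 // ltW.
exists d; split => // x xb; rewrite affE /affine_span /= => xA.
have cA : (c - p0 <= A)%MS.
  by rewrite /c addrC addKr; apply: summx_sub => j _; apply/scalemx_sub/row_sub.
have xcA : (x - c <= A)%MS.
  have -> : x - c = (x - p0) + - (c - p0) by rewrite opprB addrA subrK.
  by rewrite addmx_sub // eqmx_opp.
have [al [xe alb]] := small_coords xb xcA.
have -> : x = p0 + \sum_j (iK + al 0 j) *: row j A.
  rewrite -[x](subrK c) xe /c addrCA -big_split /=; congr (_ + _).
  by apply: eq_bigr => j _; rewrite scalerDl addrC.
by apply: convex_near_barycenter => // j; apply: le_trans (alb j) dB.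
Qed.

(* The coordinatewise estimate behind the line segment principle. *)
Lemma segment_coord_bound (y b' bb cv t d : R) : 0 <= t < 1 -> 0 < d ->
  `|y - ((1 - t) * cv + t * bb)| < (1 - t) * d / 2 -> `|b' - bb| < (1 - t) * d / 2 ->
  `|(1 - t)^-1 * (y - t * b') - cv| < d.
Proof.
move=> /andP [t0 t1] d0 h1 h2; have t10 : 0 < 1 - t by rewrite subr_gt0.
set z := (1 - t)^-1 * (y - t * b') - cv.
have E : z * (1 - t) = (y - ((1 - t) * cv + t * bb)) - t * (b' - bb).
  by rewrite /z; field; rewrite gt_eqF.
suff h3 : `|z| * (1 - t) < d * (1 - t) by rewrite ltr_pM2r in h3.
rewrite -[X in _ * X < _](ger0_norm (ltW t10)) -normrM E.
apply: (le_lt_trans (ler_normB _ _)); rewrite normrM ger0_norm //.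
have : t * `|b' - bb| <= t * ((1 - t) * d / 2) by rewrite ler_wpM2l // ltW.
have : t * ((1 - t) * d / 2) <= (1 - t) * d / 2.
  by rewrite ler_piMl // ?divr_ge0 ?mulr_ge0 ?ltW.
lra.
Qed.

Lemma line_segment C c b t : convex1 C -> rint C c -> adherent C b -> 0 <= t < 1 ->
  rint C ((1 - t) *: c + t *: b).
Proof.
move=> cC [Cc [d [d0 Hd]]] cb /andP [t0 t1].
have t10 : 0 < 1 - t by rewrite subr_gt0.
have [k [A [CA CAf]]] := affine_span_basis Cc.
have affE := aff_eq_span Cc CA CAf.
have bA : affine_span c A b.
  apply: affine_span_closed => e e0; have [y [Cy yb]] := cb e e0.
  by exists y; split => //; apply: CAf.
set x := (1 - t) *: c + t *: b; set d' := (1 - t) * d / 2.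
have d'0 : 0 < d' by rewrite /d' divr_gt0 // mulr_gt0.
(* [y] near [x] is a convex combination of a point [c'] near [c] and a point
   [b'] of [C] near [b] *)
have key y : box x d' y -> aff C y -> C y.
  move=> yb; rewrite affE => yA.
  have [b' [Cb' bb']] := cb d' d'0.
  set c' := (1 - t)^-1 *: (y - t *: b').
  have c'A : affine_span c A c'.
    rewrite /affine_span /=.
    have -> : c' - c = (1 - t)^-1 *: ((y - c) + - (t *: (b' - c))).
      by apply/rowP => i; rewrite !mxE; field; rewrite gt_eqF.
    by apply/scalemx_sub/addmx_sub; rewrite // eqmx_opp; apply/scalemx_sub/CAf.
  have c'b : box c d c'.
    move=> i; rewrite !mxE; apply: segment_coord_bound => //; first exact/andP.
    by have := yb i; rewrite !mxE.
  have Cc' : C c' by apply: Hd => //; rewrite affE.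
  have tt : 0 <= 1 - t <= 1 by apply/andP; split; lra.
  have := cC c' b' (1 - t) Cc' Cb' tt.
  by congr C; apply/rowP => i; rewrite !mxE; field; rewrite gt_eqF.
split; last by exists d'.
apply: key; first exact: box_center.
rewrite affE /affine_span /=.
have -> : x - c = t *: (b - c) by apply/rowP => i; rewrite !mxE; ring.
exact: scalemx_sub.
Qed.

(* A nearly convex set [Om] with convex core [C] (C ⊆ Om ⊆ cl C) has its
   relative interior points in the relative interior of [C]: prolong a
   point [a] of [ri Om] slightly beyond itself away from some [c ∈ rint C],
   and apply the line segment principle. *)
Lemma rint_core C Om a : convex1 C ->
  C `<=` Om -> Om `<=` adherent C -> ri Om a -> rint C a.
Proof.
move=> cC COm Omc /ri_rint [Oma [d [d0 Hd]]].
have [p [Cp _]] := Omc a Oma 1 ltr01.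
have [c ric] := convex_rint_exists cC Cp.
have [e e0 He] := box_prolong a c d0.
set a' := a + e *: (a - c).
have Oa' : Om a'.
  apply: Hd; first by apply: He; rewrite lexx ltW.
  by apply: aff_line => //; apply/COm/ric.1.
have e10 : 0 < 1 + e by rewrite ltr_wpDl // ltW.
have tr : 0 <= (1 + e)^-1 < 1 by rewrite invr_ge0 ltW //= invf_lt1 //; lra.
have := line_segment cC ric (Omc a' Oa') tr.
by congr rint; apply/rowP => i; rewrite !mxE; field; exact: lt0r_neq0.
Qed.

Lemma rint_prolong C a y : convex1 C -> rint C a -> C y ->
  exists2 e, 0 < e & forall e', 0 <= e' <= e -> C (a + e' *: (a - y)).
Proof.
move=> cC [Ca [d [d0 Hd]]] Cy; have [e e0 He] := box_prolong a y d0.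
have Ce : C (a + e *: (a - y)).
  by apply: Hd; [apply: He; rewrite lexx ltW | exact: aff_line].
exists e => // e' /andP [e'0 e'e].
have tt : 0 <= e' / e <= 1.
  by apply/andP; split; [rewrite divr_ge0 // ltW | rewrite ler_pdivrMr // mul1r].
have := cC _ _ (e' / e) Ce Ca tt.
by congr C; apply/rowP => i; rewrite !mxE; field; exact: lt0r_neq0.
Qed.

End RelativeInterior.

Section InnerProduct.
Variables (R : realType) (m : nat).
Implicit Types (c u x y : 'rV[R]_m).

Lemma dotpDr c x y : dotp c (x + y) = dotp c x + dotp c y.
Proof. by rewrite /dotp -big_split; apply: eq_bigr => i _; rewrite mxE mulrDr. Qed.

Lemma dotpZr c x a : dotp c (a *: x) = a * dotp c x.
Proof. by rewrite /dotp mulr_sumr; apply: eq_bigr => i _; rewrite mxE mulrCA. Qed.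

Lemma dotpBr c x y : dotp c (x - y) = dotp c x - dotp c y.
Proof. by rewrite dotpDr -scaleN1r dotpZr mulN1r. Qed.

Lemma dotpNl c x : dotp (- c) x = - dotp c x.
Proof. by rewrite /dotp -sumrN; apply: eq_bigr => i _; rewrite mxE mulNr. Qed.

Lemma dotp0l x : dotp 0 x = 0.
Proof. by rewrite /dotp big1 // => i _; rewrite mxE mul0r. Qed.

Lemma dotp0r u : dotp u 0 = 0.
Proof. by rewrite /dotp big1 // => i _; rewrite mxE mulr0. Qed.

Lemma dotp_delta c x a (j : 'I_m) :
  dotp (c + a *: delta_mx 0 j) x = dotp c x + a * x 0 j.
Proof.
rewrite /dotp (bigD1 j) //= [in RHS](bigD1 j) //= !mxE eqxx /=.
rewrite (eq_bigr (fun i => c 0 i * x 0 i)); last first.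
  by move=> i /negbTE ij; rewrite !mxE ij andbF mulr0 addr0.
by rewrite eqxx mulr1; ring.
Qed.

Lemma dotp_bound u y e :
  (forall i, `|y 0 i| <= e) -> `|dotp u y| <= e * \sum_i `|u 0 i|.
Proof.
move=> hy; rewrite /dotp mulr_sumr; apply: (le_trans (ler_norm_sum _ _ _)).
by apply: ler_sum => i _; rewrite normrM mulrC ler_wpM2r.
Qed.

End InnerProduct.

Lemma dotp_row (R : realType) n q (c : 'rV[R]_(n + q)) (x : 'rV[R]_n) (y : 'rV[R]_q) :
  dotp c (row_mx x y) = dotp (lsubmx c) x + dotp (rsubmx c) y.
Proof.
rewrite /dotp big_split_ord /=; congr (_ + _); apply: eq_bigr => i _.
  by rewrite row_mxEl mxE.
by rewrite row_mxEr mxE.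
Qed.

Lemma sup_between (R : realType) (A B : set R) :
  A !=set0 -> B !=set0 -> (forall a b, A a -> B b -> a <= b) ->
  exists c, (forall a, A a -> a <= c) /\ (forall b, B b -> c <= b).
Proof.
move=> [a0 Aa0] [b0 Bb0] H.
have ubA : has_sup A by split; [exists a0 | exists b0 => a Aa; apply: H].
exists (sup A); split; first by move=> a Aa; apply: sup_upper_bound.
by move=> b Bb; apply: ge_sup; [exists a0 | move=> a Aa; apply: H].
Qed.

(* The vector [c] is built one coordinate at a time (Hahn–Banach style). *)
Section Separation.
Variables (R : realType) (N : nat) (K : set ('rV[R]_N * R)) (v : R).
Hypothesis K_convex : forall d1 r1 d2 r2 t, K (d1, r1) -> K (d2, r2) -> 0 <= t <= 1 ->
  K (t *: d1 + (1 - t) *: d2, t * r1 + (1 - t) * r2).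
Hypothesis K_bounded : forall r, K (0, r) -> v <= r.
Hypothesis K_reversible :
  forall d r, K (d, r) -> exists e, 0 < e /\ exists r', K (- (e *: d), r').

Definition vanish_from (k : nat) (x : 'rV[R]_N) := forall j : 'I_N, (k <= j)%N -> x 0 j = 0.

Definition separates_upto k (c : 'rV[R]_N) :=
  forall d r, K (d, r) -> vanish_from k d -> dotp c d <= r - v.

(* Base case: only the direction 0 vanishes from index 0 on. *)
Lemma separates_upto0 : separates_upto 0 0.
Proof.
move=> d r Kdr Zd; rewrite dotp0l subr_ge0; apply: K_bounded.
by rewrite (_ : d = 0) // in Kdr; apply/rowP => j; rewrite mxE; apply: Zd.
Qed.

Lemma separation_gap k c f x sg r x' s r' : separates_upto k c ->
  vanish_from k x -> 0 < sg -> K (x - sg *: f, r) ->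
  vanish_from k x' -> 0 < s -> K (x' + s *: f, r') ->
  (dotp c x - (r - v)) / sg <= (r' - v - dotp c x') / s.
Proof.
move=> sep Zx sg0 Kx Zx' s0 Kx'.
have ss0 : 0 < s + sg by rewrite addr_gt0.
set t := s / (s + sg).
have tt : 0 <= t <= 1 by rewrite /t divr_ge0 ?ltW //= ltr_pdivrMr // mul1r ltrDl.
have := K_convex Kx Kx' tt.
have -> : t *: (x - sg *: f) + (1 - t) *: (x' + s *: f) =
          (s + sg)^-1 *: (s *: x + sg *: x').
  by apply/rowP => i; rewrite !mxE /t; field; rewrite gt_eqF.
move=> /sep H.
have H' : dotp c ((s + sg)^-1 *: (s *: x + sg *: x')) <= t * r + (1 - t) * r' - v.
  by apply: H => j kj; rewrite !mxE (Zx j kj) (Zx' j kj) !mulr0 addr0 mulr0.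
rewrite dotpZr dotpDr !dotpZr -(ler_pM2l ss0) mulrA mulfV ?gt_eqF // mul1r in H'.
have E : (s + sg) * (t * r + (1 - t) * r' - v) = s * r + sg * r' - (s + sg) * v.
  by rewrite /t; field; rewrite gt_eqF.
rewrite E in H'; rewrite ler_pdivrMr // mulrAC ler_pdivlMr //; nra.
Qed.

(* One more coordinate: if a direction [f] vanishing from [k.+1] has a
   nonzero [k]-th coordinate, then adjusting [c] along that coordinate so
   that [<c', f>] is a number [cc] between the two families of slopes of
   [separation_gap] separates the points vanishing from [k.+1]. *)
Lemma separation_adjust k c (jk : 'I_N) f cc : nat_of_ord jk = k ->
  separates_upto k c -> vanish_from k.+1 f -> f 0 jk != 0 ->
  (forall x sg r, vanish_from k x -> 0 < sg -> K (x - sg *: f, r) ->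
     (dotp c x - (r - v)) / sg <= cc) ->
  (forall x s r, vanish_from k x -> 0 < s -> K (x + s *: f, r) ->
     cc <= (r - v - dotp c x) / s) ->
  separates_upto k.+1 (c + ((cc - dotp c f) / f 0 jk) *: delta_mx 0 jk).
Proof.
move=> jkE sep Zf f0 ccA ccB d r Kdr Zd.
rewrite dotp_delta; set s := d 0 jk / f 0 jk; set x := d - s *: f.
have Zx : vanish_from k x.
  move=> j kj; rewrite !mxE; have [kj'|kj'] := ltnP k j.
    by rewrite (Zd j kj') (Zf j kj') mulr0 subr0.
  rewrite (_ : j = jk); last by apply: val_inj => /=; rewrite jkE; apply/eqP; rewrite eqn_leq kj kj'.
  by rewrite /s divfK // subrr.
have dE : d = x + s *: f by rewrite /x subrK.
have -> : dotp c d + (cc - dotp c f) / f 0 jk * d 0 jk = dotp c x + s * cc.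
  by rewrite {1}dE dotpDr dotpZr /s; field.
have [s0|s0|s0] := ltrgtP s 0.
- have := ccA x (- s) r Zx; rewrite scaleNr opprK -dE oppr_gt0 => /(_ s0 Kdr).
  by rewrite ler_pdivrMr ?oppr_gt0 // => h; nra.
- have := ccB x s r Zx s0; rewrite -dE => /(_ Kdr).
  by rewrite ler_pdivlMr // => h; nra.
- rewrite s0 mul0r addr0; apply: sep => //.
  by move: Zx; rewrite /x s0 scale0r subr0.
Qed.

Lemma separation_step k c : separates_upto k c -> exists c', separates_upto k.+1 c'.
Proof.
move=> sep; have [kN|kN] := ltnP k N; last first.
  exists c => d r Kdr Zd; apply: sep => // j kj.
  by have := ltn_ord j; rewrite ltnNge (leq_trans kN kj).
set jk := Ordinal kN.
have [[f [rf [Kf [Zf f0]]]]|nf] :=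
  pselect (exists f rf, K (f, rf) /\ vanish_from k.+1 f /\ f 0 jk != 0); last first.
  (* all directions vanish from [k] on: [c] already works *)
  exists c => d r Kdr Zd; apply: sep => // j kj; have [kj'|kj'] := ltnP k j.
    exact: Zd.
  rewrite (_ : j = jk); last by apply: val_inj => /=; apply/eqP; rewrite eqn_leq kj kj'.
  by apply/eqP/negP => dk; apply: nf; exists d, r; split => //; split => //; apply/negP.
pose A := [set a | exists x sg r, [/\ vanish_from k x, 0 < sg, K (x - sg *: f, r) &
            a = (dotp c x - (r - v)) / sg]].
pose B := [set b | exists x s r, [/\ vanish_from k x, 0 < s, K (x + s *: f, r) &
            b = (r - v - dotp c x) / s]].
have Z0 : vanish_from k 0 by move=> j _; rewrite mxE.
have An : A !=set0.
  have [e [e0 [r' Kr']]] := K_reversible Kf.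
  by exists ((dotp c 0 - (r' - v)) / e), 0, e, r'; rewrite sub0r.
have Bn : B !=set0 by exists ((rf - v - dotp c 0) / 1), 0, 1, rf; rewrite add0r scale1r.
have AB a b : A a -> B b -> a <= b.
  move=> [x [sg [r [Zx sg0 Kx ->]]]] [x' [s [r' [Zx' s0 Kx' ->]]]].
  exact: separation_gap sep Zx sg0 Kx Zx' s0 Kx'.
have [cc [ccA ccB]] := sup_between An Bn AB.
exists (c + ((cc - dotp c f) / f 0 jk) *: delta_mx 0 jk).
apply: separation_adjust Zf f0 _ _ => // [x sg r Zx sg0 Kx | x s r Zx s0 Kx].
  by apply: ccA; exists x, sg, r.
by apply: ccB; exists x, s, r.
Qed.

Lemma separation : exists c : 'rV[R]_N, forall d r, K (d, r) -> dotp c d <= r - v.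
Proof.
have [c sep] : exists c, separates_upto N c.
  have all_k k : exists c, separates_upto k c.
    elim: k => [|k [c sepk]]; first by exists 0; apply: separates_upto0.
    exact: separation_step sepk.
  exact: all_k.
by exists c => d r Kdr; apply: sep => // j Nj; have := ltn_ord j; rewrite ltnNge Nj.
Qed.

End Separation.

Section ProductSpaces.
Variable R : realType.

Lemma closure_adherent m (A : set 'rV[R]_m) x : closure A x -> adherent A x.
Proof.
move=> cx e e0; have [y [Ay bxy]] := cx _ (nbhsx_ballx x e e0).
by exists y; split => // i; case: bxy => _ /(_ 0 i); rewrite /ball /= distrC.
Qed.

Lemma closure_pair n q (A : set ('rV[R]_n * 'rV[R]_q)) z w :
  closure A (z, w) -> forall e, 0 < e ->
  exists z' w', A (z', w') /\ box z e z' /\ box w e w'.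
Proof.
move=> cx e e0; have [[z' w'] [Ay [b1 b2]]] := cx _ (nbhsx_ballx (z, w) e e0).
exists z', w'; split => //; split => i.
  by case: b1 => _ /(_ 0 i); rewrite /ball /= distrC.
by case: b2 => _ /(_ 0 i); rewrite /ball /= distrC.
Qed.

Lemma closure_epi n (A : set ('rV[R]_n * R^o)) z (r : R) :
  closure A (z, r) -> forall e, 0 < e ->
  exists z' r', A (z', r') /\ box z e z' /\ `|r - r'| < e.
Proof.
move=> cx e e0; have [[z' r'] [Ay [b1 b2]]] := cx _ (nbhsx_ballx (z, r : R^o) e e0).
exists z', r'; split => //; split => [i|]; last by move: b2; rewrite /ball.
by case: b1 => _ /(_ 0 i); rewrite /ball /= distrC.
Qed.

Definition rowset n q (C : set ('rV[R]_n * 'rV[R]_q)) : set 'rV[R]_(n + q) :=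
  [set y | exists z w, C (z, w) /\ y = row_mx z w].

Lemma rowsetP n q (C : set ('rV[R]_n * 'rV[R]_q)) z w : rowset C (row_mx z w) <-> C (z, w).
Proof.
by split => [[z' [w' [C' /eq_row_mx [-> ->]]]] // | Czw]; exists z, w.
Qed.

Lemma closure_rowset n q (C : set ('rV[R]_n * 'rV[R]_q)) z w :
  closure C (z, w) -> adherent (rowset C) (row_mx z w).
Proof.
move=> cx e e0; have [z' [w' [Cz [b1 b2]]]] := closure_pair cx e0.
exists (row_mx z' w'); split; first by exists z', w'.
move=> i; case: (splitP i) => j ej.
  by rewrite (_ : i = lshift q j) ?row_mxEl; [apply: b1 | apply: val_inj].
by rewrite (_ : i = rshift n j) ?row_mxEr; [apply: b2 | apply: val_inj].
Qed.

Lemma convex_rowset n q (C : set ('rV[R]_n * 'rV[R]_q)) :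
  convex2 C -> convex1 (rowset C).
Proof.
move=> cC _ _ t [z1 [w1 [C1 ->]]] [z2 [w2 [C2 ->]]] tt.
rewrite !scale_row_mx add_row_mx; apply/rowsetP.
exact: (cC (z1, w1) (z2, w2) t C1 C2 tt).
Qed.

Definition fst_proj n (W : normedModType R) (C : set ('rV[R]_n * W)) : set 'rV[R]_n :=
  [set x | exists y, C (x, y)].

Lemma convex_proj n (W : normedModType R) (C : set ('rV[R]_n * W)) :
  convex2 C -> convex1 (fst_proj C).
Proof.
move=> cC x1 x2 t [y1 C1] [y2 C2] tt.
by exists (t *: y1 + (1 - t) *: y2); exact: (cC (x1, y1) (x2, y2) t C1 C2 tt).
Qed.

End ProductSpaces.

Lemma le_up_to_eps (R : realType) (v X M : R) : 0 <= M ->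
  (forall e, 0 < e -> v <= X + e * M) -> v <= X.
Proof.
move=> M0 H; apply/ler_addgt0Pr => e e0.
have eM : e / (M + 1) * M <= e.
  by rewrite mulrAC ler_pdivrMr ?ltr_wpDl // ler_pM2l // lerDl.
have := H (e / (M + 1)) (divr_gt0 e0 (ltr_wpDl M0 ltr01)); lra.
Qed.

Lemma le_segment_limit (R : realType) (v al be : R) :
  (forall t, 0 <= t < 1 -> v <= al + t * be) -> v <= al + be.
Proof.
move=> H; apply: (le_up_to_eps (normr_ge0 be)) => e e0.
set s := Num.min e 1.
have s0 : 0 < s by rewrite lt_min e0 ltr01.
have s1 : s <= 1 by rewrite ge_min lexx orbT.
have se : s <= e by rewrite ge_min lexx.
have := H (1 - s); rewrite subr_ge0 s1 ltrBlDr ltrDl s0 => /(_ isT).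
have : - (s * be) <= s * `|be|.
  by rewrite -mulrN; apply: ler_wpM2l; [exact: ltW | rewrite -normrN ler_norm].
have : s * `|be| <= e * `|be| by rewrite ler_wpM2r.
rewrite mulrBl mul1r; lra.
Qed.

(* Weak duality: every value of the dual function is below the primal value,
   since [h1 u ys <= -(<u,x> - phi x) + <u,x>] for every feasible [x]. *)
Lemma weak_duality (R : realType) n q (phi : 'rV[R]_n -> \bar R)
    (Theta : set 'rV[R]_n) (G : 'rV[R]_n -> set 'rV[R]_q) :
  (forall x, (-oo < phi x)%E) ->
  (dual_value phi Theta G <= primal_value phi Theta G)%E.
Proof.
move=> phip; apply: ge_ereal_sup => _ [[u ys] _ <-] /=.
apply: le_ereal_inf_tmp => _ [x [Tx Gx] <-].
have [hx|hx] := leP +oo%E (phi x).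
  by rewrite (@le_anti _ _ (phi x) +oo%E) ?leey ?hx.
have fx : phi x = (fine (phi x))%:E.
  by rewrite fineK // fin_numE (gt_eqF (phip x)) (lt_eqF hx).
rewrite /h1 fx; set r := fine (phi x).
have hc : ((dotp u x - r)%:E <= fconj phi u)%E.
  by apply: ereal_sup_ubound; exists x => //; rewrite /= fx.
have hi : (ereal_inf [set (dotp u p.1 - dotp ys p.2)%:E | p in
     [set p : 'rV[R]_n * 'rV[R]_q | Theta p.1 /\ G p.1 p.2]] <= (dotp u x)%:E)%E.
  by apply: ereal_inf_lbound; exists (x, 0) => //=; rewrite dotp0r subr0.
have hc' : (- fconj phi u <= (r - dotp u x)%:E)%E by rewrite leeNl -EFinN opprB.
by apply: le_trans (leeD hc' hi) _; rewrite -EFinD subrK.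
Qed.

(* Dual attainment: multipliers [(u, ys)] satisfying the Lagrangian
   inequality below give [v <= h1 u ys]; a feasible point of finite value
   makes the inner infimum of [h1] finite. *)
Lemma multipliers_dual_bound (R : realType) n q (phi : 'rV[R]_n -> \bar R)
    (Theta : set 'rV[R]_n) (G : 'rV[R]_n -> set 'rV[R]_q) (v : R) u ys xf :
  (forall x, (-oo < phi x)%E) -> Theta xf -> G xf 0 -> (phi xf < +oo)%E ->
  (forall x (r : R) z w, (phi x <= r%:E)%E -> Theta z -> G z w ->
     v <= r - dotp u x + dotp u z - dotp ys w) ->
  (v%:E <= h1 phi Theta G u ys)%E.
Proof.
move=> phip Txf Gxf exf Hall.
have finphi x : (phi x < +oo)%E -> phi x = (fine (phi x))%:E.
  by move=> hx; rewrite fineK // fin_numE (gt_eqF (phip x)) (lt_eqF hx).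
rewrite /h1; set I := ereal_inf _.
have lbI x : (phi x < +oo)%E -> ((v - fine (phi x) + dotp u x)%:E <= I)%E.
  move=> hx; apply: le_ereal_inf_tmp => _ [[z w] [Tz Gzw] <-] /=; rewrite lee_fin.
  by have := Hall x (fine (phi x)) z w _ Tz Gzw; rewrite -finphi // => /(_ (lexx _)); lra.
have ubI : (I <= (dotp u xf)%:E)%E.
  by apply: ereal_inf_lbound; exists (xf, 0) => //=; rewrite dotp0r subr0.
have Ifin : I \is a fin_num.
  by rewrite fin_numE (gt_eqF (lt_le_trans (ltNyr _) (lbI _ exf)))
    (lt_eqF (le_lt_trans ubI (ltry _))).
set i := fine I; have IE : I = i%:E by rewrite fineK.
have fc : (fconj phi u <= (i - v)%:E)%E.
  apply: ge_ereal_sup => _ [x _ <-].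
  have [hx|hx] := leP +oo%E (phi x).
    by rewrite (_ : phi x = +oo%E) ?leNye //; apply: le_anti; rewrite leey hx.
  rewrite (finphi _ hx) -EFinB lee_fin; have := lbI x hx; rewrite IE lee_fin; lra.
have h : ((v - i)%:E <= - fconj phi u)%E by rewrite leeNr -EFinN opprB.
by rewrite IE; apply: le_trans _ (leeD h (lexx i%:E)); rewrite -EFinD subrK.
Qed.

Section ConvexCores.
Variables (R : realType) (n q : nat) (phi : 'rV[R]_n -> \bar R).
Variables (Theta : set 'rV[R]_n) (G : 'rV[R]_n -> set 'rV[R]_q).
Variables (C1 : set ('rV[R]_n * R^o)) (C2 : set 'rV[R]_n) (C3 : set ('rV[R]_n * 'rV[R]_q)).
Hypothesis phi_gtNy : forall x, (-oo < phi x)%E.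
Hypotheses (cC1 : convex2 C1) (C1e : C1 `<=` epigraph phi) (eC1 : epigraph phi `<=` closure C1).
Hypotheses (cC2 : convex1 C2) (C2T : C2 `<=` Theta) (TC2 : Theta `<=` closure C2).
Hypotheses (cC3 : convex2 C3) (C3g : C3 `<=` gph G) (gC3 : gph G `<=` closure C3).

Lemma core_edom : fst_proj C1 `<=` edom phi /\ edom phi `<=` adherent (fst_proj C1).
Proof.
split=> [x [r /C1e] | x hx].
  by rewrite /epigraph /edom /= => h; apply: le_lt_trans h (ltry _).
have fx : phi x = (fine (phi x))%:E.
  by rewrite fineK // fin_numE (gt_eqF (phi_gtNy x)) (lt_eqF hx).
have /closure_epi cl : closure C1 (x, fine (phi x)) by apply: eC1; rewrite /epigraph /= -fx.
by move=> e e0; have [x' [r' [C1x [bx _]]]] := cl e e0; exists x'; split => //; exists r'.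
Qed.

Lemma core_mdom : fst_proj C3 `<=` mdom G /\ mdom G `<=` adherent (fst_proj C3).
Proof.
split=> [z [w /C3g h] | z [w Gzw] e e0]; first by exists w.
have [z' [w' [C3z [bz _]]]] := closure_pair (@gC3 (z, w) Gzw) e0.
by exists z'; split => //; exists w'.
Qed.

(* Over a relative interior point of the domain of [C3] lies a relative
   interior point of [C3]: prolong [a] beyond itself away from the domain
   point [c1] of some [c ∈ rint C3], and use the line segment principle. *)
Lemma rint_above a : rint (fst_proj C3) a -> exists b, rint (rowset C3) (row_mx a b).
Proof.
move=> riP3; have cC3r := convex_rowset cC3.
have [w0 C3a] := riP3.1.
have [c rc] := convex_rint_exists cC3r (proj2 (rowsetP _ _ _) C3a).
have [c1 [c2 [C3c ce]]] := rc.1; subst c.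
have [e e0 /(_ e)] := rint_prolong (convex_proj cC3) riP3 (ex_intro _ c2 C3c).
rewrite lexx ltW // => /(_ isT) [b' C3a'].
have e10 : 0 < 1 + e by rewrite ltr_wpDl // ltW.
set t := (1 + e)^-1.
have tr : 0 <= t < 1 by rewrite invr_ge0 ltW //= invf_lt1 //; lra.
have := line_segment cC3r rc (adherent_self (proj2 (rowsetP _ _ _) C3a')) tr.
rewrite !scale_row_mx add_row_mx (_ : (1 - t) *: c1 + t *: (a + e *: (a - c1)) = a).
  by exists ((1 - t) *: c2 + t *: b').
by apply/rowP => i; rewrite !mxE /t; field; exact: lt0r_neq0.
Qed.

Lemma common_rint_point :
  ri (edom phi) `&` ri (mdom G) `&` ri Theta !=set0 ->
  ri (mimage G (Theta `&` edom phi)) 0 ->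
  exists x0, [/\ rint (fst_proj C1) x0, rint C2 x0 & rint (rowset C3) (row_mx x0 0)].
Proof.
move=> [a [[ra1 ra2] ra3]] rB.
have [P1e eP1] := core_edom; have [P3d dP3] := core_mdom.
have TcC2 : Theta `<=` adherent C2 by move=> z /TC2; apply: closure_adherent.
have riC2 := rint_core cC2 C2T TcC2 ra3.
have [b rab] := rint_above (rint_core (convex_proj cC3) P3d dP3 ra2).
(* [b ∈ G a] is in the image; going beyond [0] away from [b] gives [z1] with
   [- e b ∈ G z1], and [x0] is the matching point between [a] and [z1]. *)
have [Om0 [d [d0 Hd]]] := ri_rint rB.
have Omb : mimage G (Theta `&` edom phi) b.
  exists a; first by split; [apply/C2T/riC2.1 | exact: ra1.1].
  exact: (@C3g (a, b) (proj1 (rowsetP _ _ _) rab.1)).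
have [e e0 He] := box_prolong 0 b d0.
have : mimage G (Theta `&` edom phi) (0 + e *: (0 - b)).
  by apply: Hd; [apply: He; rewrite lexx ltW | apply: aff_line].
rewrite add0r sub0r => -[z1 [Tz1 ez1] Gz1].
have e10 : 0 < 1 + e by rewrite ltr_wpDl // ltW.
set t := (1 + e)^-1.
have tr : 0 <= t < 1 by rewrite invr_ge0 ltW //= invf_lt1 //; lra.
exists ((1 - t) *: a + t *: z1); split.
- exact: line_segment (convex_proj cC1) (rint_core (convex_proj cC1) P1e eP1 ra1) (eP1 _ ez1) tr.
- by apply: line_segment => //; apply: TcC2.
- have := line_segment (convex_rowset cC3) rab (closure_rowset (@gC3 (z1, e *: - b) Gz1)) tr.
  rewrite !scale_row_mx add_row_mx (_ : (1 - t) *: b + t *: (e *: - b) = 0) //.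
  by apply/rowP => i; rewrite !mxE /t; field; exact: lt0r_neq0.
Qed.

(* The convex set of "directions and values" to be separated from the ray
   [{0} × (-oo, v)]: the direction [(z - x, w)] with value [r] for
   [(x, r) ∈ C1], [z ∈ C2], [(z, w) ∈ C3]. *)
Definition lagrange_set : set ('rV[R]_(n + q) * R) :=
  [set p | exists x (r : R) z w,
     [/\ C1 (x, r), C2 z, C3 (z, w) & p = (row_mx (z - x) w, r)]].

Lemma lagrange_set_convex d1 r1 d2 r2 t :
  lagrange_set (d1, r1) -> lagrange_set (d2, r2) -> 0 <= t <= 1 ->
  lagrange_set (t *: d1 + (1 - t) *: d2, t * r1 + (1 - t) * r2).
Proof.
move=> [x1 [s1 [z1 [w1 [C11 C21 C31 [-> ->]]]]]]
  [x2 [s2 [z2 [w2 [C12 C22 C32 [-> ->]]]]]] tt.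
exists (t *: x1 + (1 - t) *: x2), (t * s1 + (1 - t) * s2),
  (t *: z1 + (1 - t) *: z2), (t *: w1 + (1 - t) *: w2); split.
- exact: cC1 C11 C12 tt.
- exact: cC2.
- exact: cC3 C31 C32 tt.
- congr pair; rewrite !scale_row_mx add_row_mx; congr row_mx.
  by apply/rowP => i; rewrite !mxE; ring.
Qed.

(* On the direction 0, the value is at least a lower bound [v] of the primal
   problem, because then [x = z] is feasible. *)
Lemma lagrange_set_bounded (v : R) :
  (forall x, Theta x -> G x 0 -> (v%:E <= phi x)%E) ->
  forall r, lagrange_set (0, r) -> v <= r.
Proof.
move=> Hv r [x [r' [z [w [C1x C2z C3zw [e0 ->]]]]]].
move: e0; rewrite -row_mx0 => /esym /eq_row_mx [/eqP]; rewrite subr_eq0 => /eqP ezx ew.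
rewrite ezx ew in C2z C3zw.
rewrite -lee_fin; apply: le_trans (Hv x (C2T C2z) (C3g C3zw)) (C1e C1x).
Qed.

Lemma lagrange_set_reversible x0 :
  rint (fst_proj C1) x0 -> rint C2 x0 -> rint (rowset C3) (row_mx x0 0) ->
  forall d r, lagrange_set (d, r) -> exists e, 0 < e /\ exists r', lagrange_set (- (e *: d), r').
Proof.
move=> r1 r2 r3 d r [x [r' [z [w [C1x C2z C3zw [-> _]]]]]].
have [e1 e10 H1] := rint_prolong (convex_proj cC1) r1 (ex_intro _ r' C1x).
have [e2 e20 H2] := rint_prolong cC2 r2 C2z.
have [e3 e30 H3] := rint_prolong (convex_rowset cC3) r3 (proj2 (rowsetP _ _ _) C3zw).
set e := Num.min e1 (Num.min e2 e3).
have e0 : 0 < e by rewrite /e !lt_min e10 e20 e30.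
have ee1 : 0 <= e <= e1 by rewrite ltW //= /e ge_min lexx.
have ee2 : 0 <= e <= e2 by rewrite ltW //= /e !ge_min lexx orbT.
have ee3 : 0 <= e <= e3 by rewrite ltW //= /e !ge_min lexx !orbT.
have [[r'' C1'] C2'] := (H1 e ee1, H2 e ee2).
have := H3 e ee3.
rewrite opp_row_mx add_row_mx scale_row_mx add_row_mx add0r => /rowsetP C3'.
exists e; split => //; exists r''.
exists (x0 + e *: (x0 - x)), r'', (x0 + e *: (x0 - z)), (e *: (0 - w)); split => //.
by congr pair; rewrite scale_row_mx opp_row_mx; congr row_mx;
  apply/rowP => i; rewrite !mxE; ring.
Qed.

Lemma core_multipliers (v : R) x0 :
  (forall x, Theta x -> G x 0 -> (v%:E <= phi x)%E) ->
  rint (fst_proj C1) x0 -> rint C2 x0 -> rint (rowset C3) (row_mx x0 0) ->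
  exists u ys, forall x r z w, C1 (x, r) -> C2 z -> C3 (z, w) ->
    v <= r - dotp u x + dotp u z - dotp ys w.
Proof.
move=> Hv r1 r2 r3.
have [c Hc] := separation lagrange_set_convex (lagrange_set_bounded Hv)
  (lagrange_set_reversible r1 r2 r3).
exists (- lsubmx c), (rsubmx c) => x r z w C1x C2z C3zw.
have /Hc : lagrange_set (row_mx (z - x) w, r) by exists x, r, z, w.
rewrite dotp_row dotpBr !dotpNl; lra.
Qed.

(* The multiplier inequality passes from the cores to their closures: in the
   epigraph by approximation, in [Theta] and [gph G] along segments from the
   relative interior point [(x0, 0)]. *)
Lemma multipliers_closure (v : R) x0 u ys :
  rint C2 x0 -> rint (rowset C3) (row_mx x0 0) ->
  (forall x r z w, C1 (x, r) -> C2 z -> C3 (z, w) ->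
    v <= r - dotp u x + dotp u z - dotp ys w) ->
  forall x (r : R) z w, (phi x <= r%:E)%E -> Theta z -> G z w ->
    v <= r - dotp u x + dotp u z - dotp ys w.
Proof.
move=> r2 r3 H.
have H1 x (r : R) z w : (phi x <= r%:E)%E -> C2 z -> C3 (z, w) ->
    v <= r - dotp u x + dotp u z - dotp ys w.
  move=> hx C2z C3zw.
  have cx : closure C1 (x, r : R^o) by apply: eC1.
  have M0 : 0 <= 1 + \sum_i `|u 0 i| by rewrite addr_ge0 // sumr_ge0.
  apply: (le_up_to_eps M0) => e e0.
  have [x' [r' [C1x [bx br]]]] := closure_epi cx e0.
  have := H _ _ _ _ C1x C2z C3zw.
  have : `|dotp u (x' - x)| <= e * \sum_i `|u 0 i|.
    by apply: dotp_bound => i; rewrite !mxE ltW // bx.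
  rewrite dotpBr ler_norml => /andP [h1 h2].
  move: br; rewrite ltr_norml => /andP [h3 h4]; lra.
move=> x r z w hx Tz Gzw.
suff : v <= (r - dotp u x + dotp u x0) + (dotp u z - dotp u x0 - dotp ys w) by lra.
apply: le_segment_limit => t tr.
have C2t := (line_segment cC2 r2 (closure_adherent (TC2 Tz)) tr).1.
have := (line_segment (convex_rowset cC3) r3 (closure_rowset (@gC3 (z, w) Gzw)) tr).1.
rewrite !scale_row_mx add_row_mx => /rowsetP C3t.
have := H1 _ _ _ _ hx C2t C3t.
rewrite !dotpDr !dotpZr dotp0r mulr0 add0r; lra.
Qed.

End ConvexCores.

Theorem theorem7p6 (R : realType) (n q : nat) (phi : 'rV[R]_n -> \bar R)
  (Theta : set 'rV[R]_n) (G : 'rV[R]_n -> set 'rV[R]_q) :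
  proper_fun phi -> nearly_convex_fun phi ->
  nearly_convex1 Theta -> nearly_convex_map G ->
  ri (edom phi) `&` ri (mdom G) `&` ri Theta !=set0 ->
  ri (mimage G (Theta `&` edom phi)) 0 ->
  primal_value phi Theta G = dual_value phi Theta G.
Proof.
move=> [_ phip] [C1 [cC1 [C1e eC1]]] [C2 [cC2 [C2T TC2]]] [C3 [cC3 [C3g gC3]]] Hri Hri0.
apply/eqP; rewrite eq_le weak_duality // andbT.
have [xf [Txf exf] Gxf] := Hri0.1.
have [x0 [r1 r2 r3]] := common_rint_point phip cC1 C1e eC1 cC2 C2T TC2 cC3 C3g gC3 Hri Hri0.
have Vlt : (primal_value phi Theta G < +oo)%E.
  by apply: le_lt_trans exf; apply: ereal_inf_lbound; exists xf.
case EV: (primal_value phi Theta G) Vlt => [v| |] // _; last by rewrite leNye.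
have Hv x : Theta x -> G x 0 -> (v%:E <= phi x)%E.
  by move=> Tx Gx; rewrite -EV; apply: ereal_inf_lbound; exists x.
have [u [ys Hc]] := core_multipliers cC1 C1e cC2 C2T cC3 C3g Hv r1 r2 r3.
have Hall := multipliers_closure eC1 cC2 TC2 cC3 gC3 r2 r3 Hc.
apply: le_trans (ereal_sup_ubound _); last by exists (u, ys).
exact: multipliers_dual_bound phip Txf Gxf exf Hall.
Qed.
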